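(* Let $K$ and $L$ be finite simplicial complexes. If $K$ and $L$ have the same simple homotopy type, then $\det(K)=\det(L)$, where $\det(K):=|\det(\mathcal{X}(K)_M)|$.
   Context: $\mathcal{X}(K)$ is the face poset of $K$ (simplices ordered by inclusion). For a finite poset $X=\{x_1,\dots,x_n\}$ (with a labelling), $X_M=(x_{i,j})$ is the $n\times n$ matrix with $x_{i,j}=0$ if $x_i\le x_j$ and $x_{i,j}=1$ otherwise. Simple homotopy type of simplicial complexes is in the classical sense of Whitehead (finite sequences of elementary collapses and expansions). *)

From HB Require Import structures.
From Stdlib Require Import Relations.Relation_Operators.
From mathcomp Require Import all_boot all_algebra finmap.
Set Implicit Arguments. Unset Strict Implicit. Unset Printing Implicit Defensive.
Import GRing.Theory.
Local Open Scope fset_scope.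

Definition is_complex (K : {fset {fset nat}}) : Prop :=
  (forall s, s \in K -> s != fset0) /\
  (forall s t, s \in K -> t `<=` s -> t != fset0 -> t \in K).

Definition elementary_collapse (K K' : {fset {fset nat}}) : Prop :=
  exists sigma tau : {fset nat},
    [/\ sigma \in K, tau \in K, sigma `<` tau & #|` tau| = (#|` sigma|).+1] /\
    (forall rho, rho \in K -> sigma `<=` rho -> rho = sigma \/ rho = tau) /\
    K' = K `\` [fset sigma; tau].

Definition collapse_step (K K' : {fset {fset nat}}) : Prop :=
  [/\ is_complex K, is_complex K' & elementary_collapse K K'].

Definition simple_homotopy_equiv (K L : {fset {fset nat}}) : Prop :=
  clos_refl_sym_trans _ collapse_step K L.

(* Face poset X(K) labelled by the enumeration of K; X(K)_M has entry 0 if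
   x_i <= x_j (inclusion) and 1 otherwise. *)
Definition face_poset_matrix (K : {fset {fset nat}}) :
    'M[int]_(size (enum_fset K)) :=
  \matrix_(i, j)
    (if nth fset0 (enum_fset K) i `<=` nth fset0 (enum_fset K) j then 0 else 1)%R.

Definition det_complex (K : {fset {fset nat}}) : nat :=
  absz (\det (face_poset_matrix K))%R.

(* Removing a free face [sigma] and then its coface [tau = v |` sigma] each
   only change the sign of the determinant of the face-poset matrix, by a
   column operation.  In the transposed matrix, freeness of [sigma] makes its
   column the column of [tau] minus a unit vector.  In the matrix of
   [K `\ sigma], the column of [tau] is a unit vector away from an affine
   combination of the columns of the proper faces [w] of [tau] through [v], with
   coefficients [-mu(w, tau)]: at a remaining face [z] this is
   inclusion-exclusion over the Boolean interval from [v |` z] to [tau].  So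
   [|det|] is invariant under elementary collapses and expansions. *)

From mathcomp Require Import all_boot all_algebra all_fingroup finmap zify.

Set Implicit Arguments. Unset Strict Implicit. Unset Printing Implicit Defensive.
Import GRing.Theory.
Local Open Scope fset_scope.
Local Open Scope ring_scope.

Lemma det_col0_comb (R : comNzRingType) n (A : 'M[R]_n.+1) (c : R) (y : 'I_n -> R) :
  (forall i, A i ord0 = c * (i == ord0)%:R + \sum_k y k * A i (lift ord0 k)) ->
  \det A = c * \det (row' ord0 (col' ord0 A)).
Proof.
move=> A0.
have cof0 (k : 'I_n) : \sum_i A i (lift ord0 k) * cofactor A i ord0 = 0.
  have := congr1 (fun B : 'M_n.+1 => B ord0 (lift ord0 k)) (mul_adj_mx A).
  rewrite !mxE (negbTE (neq_lift ord0 k)) mulr0n => adjA0.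
  by rewrite -[RHS]adjA0; apply: eq_bigr => i _; rewrite mxE mulrC.
rewrite (expand_det_col A ord0).
under eq_bigr do rewrite A0 mulrDl mulr_suml.
rewrite big_split /= exchange_big /= [X in _ + X]big1 => [|k _]; last first.
  by under eq_bigr do rewrite -mulrA; rewrite -mulr_sumr cof0 mulr0.
rewrite addr0 (bigD1 ord0) //= big1 => [|i /negbTE->]; last by rewrite mulr0 mul0r.
by rewrite mulr1 addr0 /cofactor expr0 mul1r.
Qed.

Definition nrel_mx {R : comNzRingType} (T : Type) (e : rel T) n (f : 'I_n -> T) : 'M[R]_n :=
  \matrix_(i, j) (if e (f i) (f j) then 0 else 1).

Definition nrel_det {R : comNzRingType} (T : Type) (e : rel T) (x0 : T) (s : seq T) : R :=
  \det (nrel_mx e (fun i : 'I_(size s) => nth x0 s i)).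

Section NonRelationDeterminant.
Variable R : comNzRingType.

Lemma nrel_det_flip T (e : rel T) x0 s :
  nrel_det e x0 s = nrel_det [rel x y | e y x] x0 s :> R.
Proof. by rewrite /nrel_det -det_tr; congr (\det _); apply/matrixP => i j; rewrite !mxE. Qed.

Lemma det_nrel_mx_perm T (e : rel T) n (f : 'I_n -> T) (p : 'S_n) :
  \det (nrel_mx e (f \o p)) = \det (nrel_mx e f) :> R.
Proof.
have -> : nrel_mx e (f \o p) = row_perm p (col_perm p (nrel_mx e f)) :> 'M[R]_n.
  by apply/matrixP => i j; rewrite !mxE.
rewrite row_permE col_permE !det_mulmx !det_perm odd_permV.
by rewrite mulrC -mulrA -expr2 sqrr_sign mulr1.
Qed.

Lemma nrel_det_perm (T : eqType) (e : rel T) x0 s t :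
  perm_eq s t -> nrel_det e x0 s = nrel_det e x0 t :> R.
Proof.
move=> st; have sz_ts : size t == size s by rewrite (perm_size st).
have /tuple_permP[p t_p] : perm_eq t (in_tuple s) by rewrite perm_sym.
have nth_t (i : 'I_(size s)) : nth x0 t i = nth x0 s (p i).
  by rewrite t_p -(tnth_nth x0) tnth_mktuple (tnth_nth x0).
have -> : nrel_det e x0 t = \det (nrel_mx e (fun i : 'I_(size s) => nth x0 t i)) :> R.
  by case: _ / (eqP sz_ts).
rewrite /nrel_det -(det_nrel_mx_perm e (fun i => nth x0 s i) p); congr (\det _).
by apply/matrixP => i j; rewrite !mxE /= !nth_t.
Qed.

Lemma sum_nth_ord (T : Type) x0 (s : seq T) (F : T -> R) :
  \sum_(k < size s) F (nth x0 s k) = \sum_(w <- s) F w.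
Proof. by rewrite (big_nth x0) big_mkord. Qed.

Lemma nrel_det_cons (T : eqType) (e : rel T) x0 x s (g : T -> R) :
    \sum_(w <- s) g w = 1 ->
    {in s, forall z, (e z x)%:R = \sum_(w <- s) g w * (e z w)%:R} ->
    (e x x)%:R = 1 + \sum_(w <- s) g w * (e x w)%:R ->
  nrel_det e x0 (x :: s) = - nrel_det e x0 s :> R.
Proof.
move=> g1 gcol gx.
have ifE (b : bool) : (if b then 0 else 1 : R) = 1 - b%:R by case: b; rewrite ?subrr ?subr0.
have sum_col z : \sum_(k < size s) g (nth x0 s k) * (if e z (nth x0 s k) then 0 else 1)
               = 1 - \sum_(w <- s) g w * (e z w)%:R.
  rewrite (sum_nth_ord x0 s (fun w => g w * (if e z w then 0 else 1))).
  by under eq_bigr do rewrite ifE mulrBr mulr1; rewrite sumrB g1.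
pose A : 'M[R]_((size s).+1) := nrel_mx e (fun i : 'I_(size s).+1 => nth x0 (x :: s) i).
change (\det A = - nrel_det e x0 s).
rewrite (det_col0_comb (c := -1) (y := fun k => g (nth x0 s k))) ?mulN1r.
  by congr (- \det _); apply/matrixP => i j; rewrite !mxE !lift0.
move=> i; rewrite mxE; under eq_bigr => k _ do rewrite mxE (lift0 k).
case: (unliftP ord0 i) => [k ->|->] /=; rewrite sum_col ifE.
  by rewrite add0n mulr0 add0r gcol ?mem_nth.
by rewrite mulr1 gx opprD addrA subrr add0r addKr.
Qed.

Lemma perm_enum_fsetD1 (T : choiceType) (X : {fset T}) a :
  a \in X -> perm_eq X (a :: enum_fset (X `\ a)).
Proof.
move=> aX; apply: uniq_perm; rewrite /= ?fset_uniq ?in_fsetD1 ?eqxx //.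
by move=> z; rewrite inE in_fsetD1; case: eqVneq => // ->.
Qed.

Lemma nrel_det_fsetD1 (T : choiceType) (e : rel T) x0 (X : {fset T}) a (g : T -> R) :
    a \in X -> \sum_(w <- X `\ a) g w = 1 ->
    {in X `\ a, forall z, (e z a)%:R = \sum_(w <- X `\ a) g w * (e z w)%:R} ->
    (e a a)%:R = 1 + \sum_(w <- X `\ a) g w * (e a w)%:R ->
  nrel_det e x0 X = - nrel_det e x0 (X `\ a) :> R.
Proof. by move=> aX; rewrite (nrel_det_perm _ _ (perm_enum_fsetD1 aX)); apply: nrel_det_cons. Qed.

End NonRelationDeterminant.

Lemma sum_fpowerset_sign (T : choiceType) (A B : {fset T}) :
  A `<` B -> \sum_(w <- fpowerset B | A `<=` w) (-1) ^+ #|` w| = 0 :> int.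
Proof.
rewrite fproperE => /andP[AB /fsubsetPn[u uB uA]].
pose flip_u (w : {fset T}) : {fset T} := if u \in w then w `\ u else u |` w.
have flip_uK : involutive flip_u.
  move=> w; rewrite /flip_u; case: (boolP (u \in w)) => uw.
    by rewrite in_fsetD1 eqxx fsetD1K.
  by rewrite in_fset1U eqxx fsetU1K.
pose F w : int := if A `<=` w then (-1) ^+ #|` w| else 0.
have F_flip w : F (flip_u w) = - F w.
  have A_flip : (A `<=` flip_u w) = (A `<=` w).
    rewrite /flip_u; case: ifP => _; first by rewrite fsubsetD1 uA andbT.
    by rewrite -fsubDset mem_fsetD1.
  rewrite /F A_flip; case: ifP => _; last by rewrite oppr0.
  rewrite /flip_u; case: (boolP (u \in w)) => uw.
    by rewrite [in RHS](cardfsD1 u w) uw exprS mulN1r opprK.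
  by rewrite cardfsU1 uw exprS mulN1r.
have flip_u_fpowerset w : (flip_u w \in fpowerset B) = (w \in fpowerset B).
  rewrite !fpowersetE /flip_u; case: ifP => uw.
    by rewrite fsubDset mem_fset1U.
  by rewrite fsubUset fsub1set uB.
rewrite big_mkcond /=; set S := \sum_(w <- _) _.
suff : S = - S by lia.
rewrite {1}/S -sumrN -(perm_big _ (_ : perm_eq [seq flip_u w | w <- fpowerset B] _)).
  by rewrite big_map; apply: eq_bigr => w _; exact: F_flip.
apply: uniq_perm; rewrite ?(map_inj_uniq (can_inj flip_uK)) ?fset_uniq // => w.
apply/mapP/idP => [[w' w'B ->]|wB]; first by rewrite flip_u_fpowerset.
by exists (flip_u w); rewrite ?flip_u_fpowerset ?flip_uK.
Qed.

Lemma fproper_card_succ (T : choiceType) (A B : {fset T}) :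
  A `<` B -> #|` B| = (#|` A|).+1 -> exists2 v, v \notin A & B = v |` A.
Proof.
rewrite fproperE => /andP[AB /fsubsetPn[v vB vA]] cardB; exists v => //.
by apply/eqP; rewrite eq_sym eqEfcard fsubUset fsub1set vB AB cardfsU1 vA cardB add1n ltnSn.
Qed.

Lemma sum_fset_delta (R : pzSemiRingType) (T : choiceType) (X : {fset T}) a (F : T -> R) :
  a \in X -> \sum_(w <- X) (w == a)%:R * F w = F a.
Proof.
move=> aX; rewrite (big_fsetD1 a) //= eqxx mul1r big1_fset ?addr0 // => w.
by rewrite in_fsetD1 => /andP[/negbTE-> _]; rewrite mul0r.
Qed.

Definition face_det (K : {fset {fset nat}}) : int := nrel_det fsubset fset0 K.

Lemma det_complexE K : det_complex K = `|face_det K|%N.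
Proof. by []. Qed.

Section ElementaryCollapse.
Variables (K : {fset {fset nat}}) (sigma tau : {fset nat}).
Hypotheses (K_complex : is_complex K) (sigmaK : sigma \in K) (tauK : tau \in K)
  (sigma_tau : sigma `<` tau)
  (sigma_free : forall rho, rho \in K -> sigma `<=` rho -> rho = sigma \/ rho = tau).

Lemma face_det_free_face : face_det K = - face_det (K `\ sigma).
Proof.
have tau_sigma : tau != sigma by rewrite eq_sym fproper_neq.
have tauK' : tau \in K `\ sigma by rewrite in_fsetD1 tau_sigma.
rewrite /face_det nrel_det_flip [in RHS]nrel_det_flip.
apply: (nrel_det_fsetD1 _ (g := fun w => (w == tau)%:R) sigmaK) => /=.
- by rewrite -[RHS](sum_fset_delta (fun=> 1) tauK'); apply: eq_bigr => w _; rewrite mulr1.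
- move=> z; rewrite in_fsetD1 => /andP[z_sigma zK].
  rewrite (sum_fset_delta (fun w => (w `<=` z)%:R) tauK'); congr (nat_of_bool _)%:R.
  apply/idP/idP => [/(sigma_free zK)[zE|->]//|/(fsubset_trans (fproper_sub sigma_tau))//].
  by rewrite zE eqxx in z_sigma.
- rewrite (sum_fset_delta (fun w => (w `<=` sigma)%:R) tauK') fsubset_refl.
  by move: sigma_tau; rewrite fproperE => /andP[_ /negbTE->]; rewrite addr0.
Qed.

Variable v : nat.
Hypotheses (v_sigma : v \notin sigma) (tauE : tau = v |` sigma).

Definition boundary_star : {fset {fset nat}} :=
  [fset w in fpowerset tau | (v \in w) && (w != tau)].

Lemma boundary_star_sub : boundary_star `<=` K `\ sigma `\ tau.
Proof.
apply/fsubsetP => w; rewrite !inE fpowersetE => /andP[wt /andP[vw ->]] /=.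
apply/andP; split; first by apply: contraNneq v_sigma => <-.
by apply: K_complex.2 tauK wt _; apply/fset0Pn; exists v.
Qed.

Lemma sum_boundary_star A : v \in A -> A `<` tau ->
  \sum_(w <- boundary_star | A `<=` w) (-1) ^+ (#|` tau| + #|` w|).+1 = 1 :> int.
Proof.
move=> vA At.
have := sum_fpowerset_sign At.
rewrite big_mkcond (bigD1_seq tau) ?fpowersetE ?fset_uniq ?(fproper_sub At) //=.
move=> /eqP; rewrite addrC addr_eq0 => /eqP sum_proper.
rewrite (eq_fbigl_cond _ (B := fpowerset tau) (Q := fun w => (w != tau) && (A `<=` w))).
  under eq_bigr do rewrite exprS exprD mulrA.
  by rewrite -mulr_sumr big_mkcondr /= sum_proper mulN1r mulrNN -expr2 sqrr_sign.
move=> w; rewrite !inE /=; case Aw: (A `<=` w); rewrite ?andbF ?andbT //.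
by rewrite (fsubsetP Aw v vA).
Qed.

Lemma face_det_coface : face_det (K `\ sigma) = - face_det (K `\ sigma `\ tau).
Proof.
(* [g w] is minus the Moebius function of [w <= tau], on the faces through [v]. *)
pose g w : int := if w \in boundary_star then (-1) ^+ (#|` tau| + #|` w|).+1 else 0.
have sum_g z : \sum_(w <- K `\ sigma `\ tau) g w * (z `<=` w)%:R
             = \sum_(w <- boundary_star | v |` z `<=` w) (-1) ^+ (#|` tau| + #|` w|).+1.
  rewrite -(big_fset_incl _ boundary_star_sub) => [|w _ /negbTE gw0]; last first.
    by rewrite /g gw0 mul0r.
  rewrite [RHS]big_mkcond; apply: eq_big_seq => w wS; rewrite /g wS fsubUset fsub1set.
  by move: wS; rewrite !inE => /andP[_ /andP[-> _]]; case: (z `<=` w); rewrite ?mulr0 ?mulr1.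
have tau_sigma : tau != sigma by rewrite tauE; apply: contraNneq v_sigma => <-; exact: fset1U1.
have vtau : v \in tau by rewrite tauE fset1U1.
have star_proper w : w \in boundary_star -> w `<` tau.
  by rewrite !inE fpowersetE fproperEneq => /andP[wt /andP[_ ->]].
apply: (nrel_det_fsetD1 _ (g := g)); first by rewrite in_fsetD1 tau_sigma.
- have := sum_g fset0; under eq_bigr do rewrite fsub0set mulr1; move=> ->.
  rewrite fsetU0 sum_boundary_star ?fset11 // fproperEcard fsub1set vtau cardfs1.
  by rewrite tauE cardfsU1 v_sigma add1n ltnS cardfs_gt0; exact: K_complex.1.
- move=> z; rewrite !in_fsetD1 => /and3P[z_tau z_sigma _]; rewrite sum_g.
  case: (boolP (z `<=` tau)) => zt; last first.
    rewrite big1_seq // => w /andP[/fsubUsetP[_ zw] /star_proper/fproper_sub wt].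
    by rewrite (fsubset_trans zw wt) in zt.
  rewrite sum_boundary_star ?fset1U1 // fproperEneq fsubUset fsub1set vtau zt !andbT.
  apply: contra_neq z_tau => vz_tau; case: (boolP (v \in z)) => vz.
    by rewrite -vz_tau mem_fset1U.
  by case/eqP: z_sigma; rewrite -(fsetU1K vz) -(fsetU1K v_sigma) vz_tau tauE.
- rewrite fsubset_refl sum_g big1_seq ?addr0 // => w /andP[/fsubUsetP[_ tw] /star_proper].
  by rewrite fproperE tw andbF.
Qed.

End ElementaryCollapse.

Lemma det_complex_collapse K K' :
  is_complex K -> elementary_collapse K K' -> det_complex K = det_complex K'.
Proof.
move=> K_complex [sigma [tau [[sigmaK tauK sigma_tau card_tau] [sigma_free ->]]]].
have [v v_sigma tauE] := fproper_card_succ sigma_tau card_tau.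
rewrite !det_complexE (face_det_free_face sigmaK tauK sigma_tau sigma_free).
by rewrite (face_det_coface K_complex sigmaK tauK v_sigma tauE) opprK fsetDDl.
Qed.

Theorem mainTheorem7 (K L : {fset {fset nat}}) :
  is_complex K -> is_complex L -> simple_homotopy_equiv K L ->
  det_complex K = det_complex L.
Proof.
move=> _ _; elim=> [K1 K2 [K1_complex _ collapse]|K1|K1 K2 _ IH|K1 K2 K3 _ IH12 _ IH23].
- exact: det_complex_collapse collapse.
- by [].
- by rewrite IH.
- by rewrite IH12 IH23.
Qed.
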